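(* Let $G=(V,E)$ be an undirected graph (finite or infinite) and $M=M(S)$ a multiplex of $G$ generated by a simplex $S$, with $\mathrm{rank}(M)\ge2$. Then for every $x\in\widetilde M$ there exist two color classes $\widehat A,\widehat B\subseteq M$ with $\widetilde A\setminus\widetilde B\neq\emptyset$ and $\widetilde B\setminus\widetilde A\neq\emptyset$ such that $x\in\widetilde A\cap\widetilde B$.
   Context: A graph $G=(V,E)$ has vertex set $V$ and edge set $E\subseteq V^2$; it is undirected if $E$ is irreflexive and symmetric. Implication classes: on $E$ define $(a,b)\Gamma(a',b')$ iff either $a=a'$ and $(b,b')\notin E$, or $b=b'$ and $(a,a')\notin E$; the classes of the transitive closure $\Gamma^*$ are the implication classes. For an implication class $A$, $A^{-1}=\{(b,a):(a,b)\in A\}$ and the color class is $\widehat A=A\cup A^{-1}$; $\widetilde A$ is the set of vertices spanned by $\widehat A$. A simplex of rank $r\ge1$ is a complete sub-graph $S=(V_S,E_S)$ of $G$ on $r+1$ vertices whose distinct undirected edges lie in distinct color classes. The multiplex generated by $S$ is $M(S)=\bigcup\{\widehat A:\widehat A\text{ a color class},\ \widehat A\cap E_S\neq\emptyset\}$, of rank $r$; $\widetilde M$ is the set of vertices spanned by $M$. *)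

From Stdlib Require Import Relations.

Section Defs.
Variable V : Type.
Variable E : V -> V -> Prop.

Definition undirected : Prop :=
  (forall a, ~ E a a) /\ (forall a b, E a b -> E b a).

Definition Gamma (p q : V * V) : Prop :=
  E (fst p) (snd p) /\ E (fst q) (snd q) /\
  ((fst p = fst q /\ ~ E (snd p) (snd q)) \/
   (snd p = snd q /\ ~ E (fst p) (fst q))).

Definition GammaStar : V * V -> V * V -> Prop := clos_trans (V * V) Gamma.

Definition impl_class (a b : V) (p : V * V) : Prop := GammaStar (a, b) p.

Definition color_class (a b : V) (p : V * V) : Prop :=
  impl_class a b p \/ impl_class a b (snd p, fst p).

Definition spanned (C : V * V -> Prop) (x : V) : Prop :=
  exists y, C (x, y) \/ C (y, x).

(* a simplex of rank r: vertices f 0, ..., f r, pairwise distinct and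
   pairwise adjacent, distinct undirected edges in distinct color classes *)
Definition simplex (r : nat) (f : nat -> V) : Prop :=
  1 <= r /\
  (forall i j, i <= r -> j <= r -> i <> j -> f i <> f j) /\
  (forall i j, i <= r -> j <= r -> i <> j -> E (f i) (f j)) /\
  (forall i j k l, i <= r -> j <= r -> k <= r -> l <= r -> i <> j -> k <> l ->
     ~ ((i = k /\ j = l) \/ (i = l /\ j = k)) ->
     ~ color_class (f i) (f j) (f k, f l)).

Definition multiplex (r : nat) (f : nat -> V) (p : V * V) : Prop :=
  exists i j, i <= r /\ j <= r /\ i <> j /\ color_class (f i) (f j) p.

End Defs.

Arguments undirected {V} E.
Arguments Gamma {V} E p q.
Arguments GammaStar {V} E.
Arguments impl_class {V} E a b p.
Arguments color_class {V} E a b p.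
Arguments spanned {V} C x.
Arguments simplex {V} E r f.
Arguments multiplex {V} E r f p.

From Stdlib Require Import Relations Classical Arith Lia.

(* Idea: let a b c be a triangle whose three edges lie in three distinct color
   classes.  Walking along Gamma-steps inside the implication class of (b,c),
   every arc (u,v) met has both ends adjacent to a, with (a,u) in the
   implication class of (a,b) and (a,v) in that of (a,c): a step leaving this
   invariant would already force (b,c) into the color class of (a,b) or of
   (a,c).  Hence the apex a is not spanned by the class of (b,c), while every
   vertex spanned by that class is spanned by the class of (a,b) or of (a,c).
   Given x spanned by the class of the edge f i f j of the simplex, pick a
   third vertex f k; the class of f i f j and the class of f k f i (or f k f j)
   containing x then cross, f j and f k being apexes over the opposite
   edges. *)

Section ColorClasses.
Variables (V : Type) (E : V -> V -> Prop).
Hypothesis HU : undirected E.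

Let E_irrefl : forall a, ~ E a a := proj1 HU.
Let E_sym : forall a b, E a b -> E b a := proj2 HU.

Lemma Gamma_fst a b c : E a b -> E a c -> ~ E b c -> Gamma E (a, b) (a, c).
Proof. unfold Gamma; simpl; auto. Qed.

Lemma Gamma_snd a b c : E b a -> E c a -> ~ E b c -> Gamma E (b, a) (c, a).
Proof. unfold Gamma; simpl; auto. Qed.

Lemma Gamma_sym p q : Gamma E p q -> Gamma E q p.
Proof.
  intros (Hp & Hq & [[Heq Hn] | [Heq Hn]]); repeat split; auto;
    [left | right]; split; auto.
Qed.

Lemma Gamma_swap p q :
  Gamma E p q -> Gamma E (snd p, fst p) (snd q, fst q).
Proof.
  intros (Hp & Hq & [[Heq Hn] | [Heq Hn]]); repeat split; simpl; auto.
Qed.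

Lemma GammaStar_sym p q : GammaStar E p q -> GammaStar E q p.
Proof.
  induction 1 as [p q H | p q s _ IHpq _ IHqs].
  - apply t_step, Gamma_sym, H.
  - apply t_trans with q; assumption.
Qed.

Lemma GammaStar_swap p q :
  GammaStar E p q -> GammaStar E (snd p, fst p) (snd q, fst q).
Proof.
  induction 1 as [p q H | p q s _ IHpq _ IHqs].
  - apply t_step, Gamma_swap, H.
  - apply t_trans with (snd q, fst q); assumption.
Qed.

Lemma GammaStar_refl a b : E a b -> GammaStar E (a, b) (a, b).
Proof. intro Hab; apply t_step, Gamma_fst; auto. Qed.

Lemma GammaStar_step p q s : GammaStar E p q -> Gamma E q s -> GammaStar E p s.
Proof. intros Hpq Hqs; apply t_trans with q; [exact Hpq | apply t_step, Hqs]. Qed.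

Lemma color_class_swap a b p : color_class E a b p -> color_class E b a p.
Proof.
  destruct p as [u v].
  intros [H | H]; apply GammaStar_swap in H; simpl in H; [right | left]; exact H.
Qed.

Lemma spanned_mono (C D : V * V -> Prop) x :
  (forall p, C p -> D p) -> spanned C x -> spanned D x.
Proof. intros HCD [y [H | H]]; exists y; auto. Qed.

Lemma spanned_color_class_l a b : E a b -> spanned (color_class E a b) a.
Proof. intro Hab; exists b; left; left; apply GammaStar_refl, Hab. Qed.

Lemma spanned_color_class_r a b : E a b -> spanned (color_class E a b) b.
Proof. intro Hab; exists a; right; left; apply GammaStar_refl, Hab. Qed.

Lemma spanned_color_class_inv b c x :
  spanned (color_class E b c) x ->
  exists u v, GammaStar E (b, c) (u, v) /\ (x = u \/ x = v).
Proof. intros [y [[H | H] | [H | H]]]; eexists _, _; split; eauto. Qed.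

Section Triangle.
Variables a b c : V.
Hypotheses (Hab : E a b) (Hac : E a c).
Hypothesis Hb : ~ color_class E a b (b, c).
Hypothesis Hc : ~ color_class E a c (b, c).

Definition apex_linked (q : V * V) : Prop :=
  E a (fst q) /\ E a (snd q) /\
  GammaStar E (a, b) (a, fst q) /\ GammaStar E (a, c) (a, snd q).

Lemma apex_linked_step u v u' v' :
  GammaStar E (b, c) (u, v) -> apex_linked (u, v) -> Gamma E (u, v) (u', v') ->
  apex_linked (u', v').
Proof.
  intros Huv (Hau & Hav & Hbu & Hcv) Hq.
  pose proof (GammaStar_step _ _ _ Huv Hq) as Hbcq.
  destruct Hq as (_ & Hu'v' & [[Heq Hvv'] | [Heq Huu']]); simpl in *.
  - subst u'.
    assert (Hav' : E a v').
    { apply NNPP; intro Hnav'; apply Hb; right; simpl.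
      assert (Hua : GammaStar E (b, c) (u, a)) by
        (apply GammaStar_step with (u, v'); [exact Hbcq | apply Gamma_fst; auto]).
      apply GammaStar_swap in Hua; simpl in Hua.
      apply t_trans with (a, u); [exact Hbu | apply GammaStar_sym, Hua]. }
    repeat split; auto.
    apply GammaStar_step with (a, v); [exact Hcv | apply Gamma_fst; auto].
  - subst v'.
    assert (Hau' : E a u').
    { apply NNPP; intro Hnau'; apply Hc; left.
      assert (Hav' : GammaStar E (b, c) (a, v)) by
        (apply GammaStar_step with (u', v); [exact Hbcq | apply Gamma_snd; auto]).
      apply t_trans with (a, v); [exact Hcv | apply GammaStar_sym, Hav']. }
    repeat split; auto.
    apply GammaStar_step with (a, u); [exact Hbu | apply Gamma_fst; auto].
Qed.

Lemma apex_linked_impl_class q : impl_class E b c q -> apex_linked q.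
Proof.
  unfold impl_class, GammaStar; intro Hq; apply clos_trans_tn1 in Hq.
  induction Hq as [q Hq | q s Hqs Hq IH].
  - destruct q; apply apex_linked_step with b c; auto.
    + apply GammaStar_refl, Hq.
    + repeat split; simpl; auto; apply GammaStar_refl; auto.
  - destruct q as [u v], s; apply apex_linked_step with u v; auto.
    apply clos_tn1_trans, Hq.
Qed.

Lemma apex_not_spanned : ~ spanned (color_class E b c) a.
Proof.
  intro Ha; apply spanned_color_class_inv in Ha as (u & v & Huv & [<- | <-]);
    destruct (apex_linked_impl_class _ Huv) as (Hau & Hav & _); eapply E_irrefl; eauto.
Qed.

Lemma base_spanned x :
  spanned (color_class E b c) x ->
  spanned (color_class E a b) x \/ spanned (color_class E a c) x.
Proof.
  intro Hx; apply spanned_color_class_inv in Hx as (u & v & Huv & [-> | ->]);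
    destruct (apex_linked_impl_class _ Huv) as (_ & _ & Hbu & Hcv);
    [left | right]; exists a; right; left; assumption.
Qed.

End Triangle.

Definition crossing_pair (M : V * V -> Prop) (a b c d x : V) : Prop :=
  E a b /\ E c d /\
  (forall p, color_class E a b p -> M p) /\
  (forall p, color_class E c d p -> M p) /\
  (exists v, spanned (color_class E a b) v /\ ~ spanned (color_class E c d) v) /\
  (exists v, spanned (color_class E c d) v /\ ~ spanned (color_class E a b) v) /\
  spanned (color_class E a b) x /\ spanned (color_class E c d) x.

Lemma multiplex_spanned_inv r f x :
  spanned (multiplex E r f) x ->
  exists i j, i <= r /\ j <= r /\ i <> j /\ spanned (color_class E (f i) (f j)) x.
Proof.
  intros [y [(i & j & Hi & Hj & Hij & H) | (i & j & Hi & Hj & Hij & H)]];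
    exists i, j; repeat split; auto; exists y; auto.
Qed.

Section Simplex.
Variables (r : nat) (f : nat -> V).
Hypothesis Hs : simplex E r f.

Lemma simplex_adj i j : i <= r -> j <= r -> i <> j -> E (f i) (f j).
Proof. apply Hs. Qed.

Lemma simplex_color_class_distinct i j k l :
  i <= r -> j <= r -> k <= r -> l <= r -> i <> j -> k <> l ->
  ~ ((i = k /\ j = l) \/ (i = l /\ j = k)) ->
  ~ color_class E (f i) (f j) (f k, f l).
Proof. apply Hs. Qed.

Lemma simplex_apex_not_spanned i j k :
  i <= r -> j <= r -> k <= r -> i <> j -> i <> k -> j <> k ->
  ~ spanned (color_class E (f j) (f k)) (f i).
Proof.
  intros; apply apex_not_spanned;
    solve [apply simplex_adj; lia | apply simplex_color_class_distinct; lia].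
Qed.

Lemma simplex_base_spanned i j k x :
  i <= r -> j <= r -> k <= r -> i <> j -> i <> k -> j <> k ->
  spanned (color_class E (f i) (f j)) x ->
  spanned (color_class E (f k) (f i)) x \/ spanned (color_class E (f k) (f j)) x.
Proof.
  intros; apply base_spanned; auto;
    solve [apply simplex_adj; lia | apply simplex_color_class_distinct; lia].
Qed.

Lemma simplex_crossing_pair i j k x :
  i <= r -> j <= r -> k <= r -> i <> j -> i <> k -> j <> k ->
  spanned (color_class E (f i) (f j)) x -> spanned (color_class E (f k) (f i)) x ->
  crossing_pair (multiplex E r f) (f i) (f j) (f k) (f i) x.
Proof.
  intros Hi Hj Hk Hij Hik Hjk Hxij Hxki.
  repeat split; auto.
  - apply simplex_adj; lia.
  - apply simplex_adj; lia.
  - intros p Hp; exists i, j; auto.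
  - intros p Hp; exists k, i; auto.
  - exists (f j); split.
    + apply spanned_color_class_r, simplex_adj; lia.
    + apply simplex_apex_not_spanned; lia.
  - exists (f k); split.
    + apply spanned_color_class_l, simplex_adj; lia.
    + apply simplex_apex_not_spanned; lia.
Qed.

End Simplex.
End ColorClasses.

Lemma third_index r i j : 2 <= r -> exists k, k <= r /\ k <> i /\ k <> j.
Proof.
  intro Hr.
  destruct (Nat.eq_dec i 0), (Nat.eq_dec j 0), (Nat.eq_dec i 1), (Nat.eq_dec j 1);
    first [exists 0; lia | exists 1; lia | exists 2; lia].
Qed.

Theorem proposition4p3 (V : Type) (E : V -> V -> Prop) (r : nat) (f : nat -> V) :
  undirected E ->
  simplex E r f ->
  2 <= r ->
  forall x : V, spanned (multiplex E r f) x ->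
  exists a b c d : V,
    E a b /\ E c d /\
    (forall p, color_class E a b p -> multiplex E r f p) /\
    (forall p, color_class E c d p -> multiplex E r f p) /\
    (exists v, spanned (color_class E a b) v /\ ~ spanned (color_class E c d) v) /\
    (exists v, spanned (color_class E c d) v /\ ~ spanned (color_class E a b) v) /\
    spanned (color_class E a b) x /\ spanned (color_class E c d) x.
Proof.
  intros HU Hs Hr x Hx.
  destruct (multiplex_spanned_inv _ _ _ _ _ Hx) as (i & j & Hi & Hj & Hij & Hxij).
  destruct (third_index r i j Hr) as (k & Hk & Hki & Hkj).
  destruct (simplex_base_spanned _ _ HU _ _ Hs i j k x) as [Hxki | Hxkj]; auto.
  - exists (f i), (f j), (f k), (f i).
    apply (simplex_crossing_pair _ _ HU _ _ Hs i j k); auto.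
  - exists (f j), (f i), (f k), (f j).
    apply (simplex_crossing_pair _ _ HU _ _ Hs j i k); auto.
    apply spanned_mono with (color_class E (f i) (f j)); auto.
    intro p; apply color_class_swap; exact HU.
Qed.
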